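(* Consider, for $\varepsilon>0$ and $|\sigma|\le\sigma_0\varepsilon$, the real analytic system $$\dot x=x(\sigma-az)+\tfrac{y}{\varepsilon}+\varepsilon\tilde f,\qquad \dot y=-\tfrac{x}{\varepsilon}+y(\sigma-az)+\varepsilon\tilde g,\qquad \dot z=-1+b(x^2+y^2)+z^2+\varepsilon\tilde h,$$ with the properties listed in the context. Take $\nu_1>0$ and the ellipsoid $S_{\nu_1}=\{z^2+\frac{b}{a+1}(x^2+y^2)=1-\nu_1\}$. Then there exists $\varepsilon_0>0$ such that for every $\varepsilon\in(0,\varepsilon_0)$ and $|\sigma|\le\sigma_0\varepsilon$, the surface $S_{\nu_1}\cap\{-1\le z\le-\varepsilon|\log\varepsilon|\}$ is contained in the region $D$ and the flow of the system points outwards on it.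
   Context: Here $a>0$, $b>0$, $\sigma_0>0$ constants; $\tilde f,\tilde g,\tilde h$ are real analytic functions of $(x,y,z,\varepsilon,\sigma)$ with $\tilde f,\tilde g=\mathcal{O}(\|(x,y)\|)$ and $\tilde h=(z+1)\tilde h_1+\tilde h_2$, $\tilde h_1$ bounded, $\tilde h_2=\mathcal{O}(\|(x,y,z+1)\|^2)$. $p_-=(0,0,-1)$ is a saddle-focus equilibrium whose two-dimensional unstable manifold satisfies $W^u(p_-)\cap\{z\le0\}=\{\frac{b}{a+1}(x^2+y^2)+z^2=1+\varepsilon(1-z^2)\psi(z,\theta)\}$ with $\psi$ analytic, $2\pi$-periodic in the polar angle $\theta$, and $|\psi|,|\partial_z\psi|\le M$, $|\partial_\theta\psi|\le\varepsilon M$ for $z\le0$. $D$ is the closed region contained in $\{z\le0\}$ with boundary $\{z=0\}\cup W^u(p_-)$. *)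

From Stdlib Require Import Reals Lra.
From Coquelicot Require Import Coquelicot.
Open Scope R_scope.

(* Type of the perturbation terms: functions of (x, y, z, eps, sigma). *)
Definition pert := R -> R -> R -> R -> R -> R.

Definition admissible (sigma0 eps1 e s : R) : Prop :=
  0 < e < eps1 /\ Rabs s <= sigma0 * e.

Definition bigO_xy (sigma0 eps1 : R) (f : pert) : Prop :=
  forall rho, 0 < rho -> exists C, forall x y z e s,
    admissible sigma0 eps1 e s ->
    Rabs x <= rho -> Rabs y <= rho -> Rabs z <= rho ->
    Rabs (f x y z e s) <= C * sqrt (x ^ 2 + y ^ 2).

Definition bounded_pert (sigma0 eps1 : R) (f : pert) : Prop :=
  forall rho, 0 < rho -> exists C, forall x y z e s,
    admissible sigma0 eps1 e s ->
    Rabs x <= rho -> Rabs y <= rho -> Rabs z <= rho ->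
    Rabs (f x y z e s) <= C.

Definition bigO2_xyz1 (sigma0 eps1 : R) (f : pert) : Prop :=
  forall rho, 0 < rho -> exists C, forall x y z e s,
    admissible sigma0 eps1 e s ->
    Rabs x <= rho -> Rabs y <= rho -> Rabs z <= rho ->
    Rabs (f x y z e s) <= C * (x ^ 2 + y ^ 2 + (z + 1) ^ 2).

Definition psi_props (sigma0 eps1 M : R) (psi : R -> R -> R -> R -> R) : Prop :=
  forall e s z th, admissible sigma0 eps1 e s ->
    psi e s z (th + 2 * PI) = psi e s z th /\
    (z <= 0 ->
      Rabs (psi e s z th) <= M /\
      ex_derive (fun z' => psi e s z' th) z /\
      Rabs (Derive (fun z' => psi e s z' th) z) <= M /\
      ex_derive (fun t => psi e s z t) th /\
      Rabs (Derive (fun t => psi e s z t) th) <= e * M).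

Definition Xfield (a b e s : R) (ft gt ht : pert) (x y z : R) : R * R * R :=
  (x * (s - a * z) + y / e + e * ft x y z e s,
   - x / e + y * (s - a * z) + e * gt x y z e s,
   -1 + b * (x ^ 2 + y ^ 2) + z ^ 2 + e * ht x y z e s).

Definition Fell (a b x y z : R) : R := z ^ 2 + b / (a + 1) * (x ^ 2 + y ^ 2).

Definition on_S (a b nu1 x y z : R) : Prop := Fell a b x y z = 1 - nu1.

(* The flow points outwards on S_nu1 at (x,y,z): grad F . X > 0. *)
Definition points_outward (a b e s : R) (ft gt ht : pert) (x y z : R) : Prop :=
  let '(X1, X2, X3) := Xfield a b e s ft gt ht x y z in
  2 * b / (a + 1) * x * X1 + 2 * b / (a + 1) * y * X2 + 2 * z * X3 > 0.

(* The region D: points with z <= 0 lying on the inner side of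
   W^u(p_-) = {b/(a+1)(x^2+y^2) + z^2 = 1 + eps (1-z^2) psi(z,theta)},
   theta the polar angle of (x,y) (every angle is allowed when x=y=0). *)
Definition inD (a b : R) (psi : R -> R -> R -> R -> R) (e s x y z : R) : Prop :=
  z <= 0 /\
  forall th, x = sqrt (x ^ 2 + y ^ 2) * cos th ->
             y = sqrt (x ^ 2 + y ^ 2) * sin th ->
    b / (a + 1) * (x ^ 2 + y ^ 2) + z ^ 2 <= 1 + e * (1 - z ^ 2) * psi e s z th.

(* On the ellipsoid F = z^2 + b/(a+1) (x^2+y^2) = 1 - nu1 the rotation terms
   y/e, -x/e cancel in grad F . X, and with b = (a+1) b/(a+1) so do the terms
   in a z; what remains of the unperturbed flux is 2 b/(a+1) (x^2+y^2) sigma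
   - 2 nu1 z.  The perturbations contribute O(e) because f, g = O(|(x,y)|) and
   h is bounded on the (compact) ellipsoid, and the sigma-term is O(e) too,
   whereas -2 nu1 z >= 2 nu1 e |ln e| dominates every C e once e is small.
   Containment in D holds because the unstable manifold differs from the unit
   ellipsoid by O(e) while S_nu1 sits at distance nu1 inside it. *)
From Stdlib Require Import Reals Lra.
From Coquelicot Require Import Coquelicot.
Open Scope R_scope.

Lemma Rabs_mul_le_norm2 (x y F C : R) :
  Rabs F <= C * sqrt (x ^ 2 + y ^ 2) ->
  Rabs (x * F) <= Rabs C * (x ^ 2 + y ^ 2).
Proof.
  intros HF.
  assert (Hr : 0 <= x ^ 2 + y ^ 2) by nra.
  pose proof (sqrt_pos (x ^ 2 + y ^ 2)) as Hq.
  pose proof (sqrt_sqrt (x ^ 2 + y ^ 2) Hr) as Hqq.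
  set (q := sqrt (x ^ 2 + y ^ 2)) in *.
  assert (Hx : Rabs x <= q).
  { rewrite <- sqrt_Rsqr_abs. apply sqrt_le_1_alt. unfold Rsqr. nra. }
  pose proof (Rabs_pos F). pose proof (Rabs_pos x). pose proof (Rle_abs C).
  rewrite Rabs_mult, <- Hqq.
  assert (Rabs x * Rabs F <= q * Rabs F) by (apply Rmult_le_compat_r; lra).
  assert (q * Rabs F <= q * (Rabs C * q)) by (apply Rmult_le_compat_l; nra).
  lra.
Qed.

Lemma Rabs_le_of_sqr_le (x K : R) : 0 <= K -> x ^ 2 <= K -> Rabs x <= 1 + K.
Proof.
  intros HK Hx. pose proof (pow2_abs x). pose proof (Rabs_pos x).
  destruct (Rle_dec (Rabs x) 1); nra.
Qed.

Lemma lt_Rabs_ln_of_lt_exp (e K : R) : 0 < e < exp (- K) -> K < Rabs (ln e).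
Proof.
  intros [He HeK].
  pose proof (ln_increasing e (exp (- K)) He HeK) as Hln.
  rewrite ln_exp in Hln.
  pose proof (Rle_abs (- ln e)). rewrite Rabs_Ropp in *. lra.
Qed.

Lemma Rabs_ht_split_le (z r2 H1 H2 C1 C2 K : R) :
  -1 <= z <= 0 -> 0 <= r2 <= K ->
  Rabs H1 <= C1 -> Rabs H2 <= C2 * (r2 + (z + 1) ^ 2) ->
  Rabs ((z + 1) * H1 + H2) <= Rabs C1 + Rabs C2 * (K + 1).
Proof.
  intros Hz Hr HH1 HH2.
  pose proof (Rabs_triang ((z + 1) * H1) H2).
  rewrite Rabs_mult, (Rabs_pos_eq (z + 1)) in * by lra.
  pose proof (Rle_abs C1). pose proof (Rle_abs C2).
  pose proof (Rabs_pos H1). pose proof (Rabs_pos C2).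
  assert ((z + 1) * Rabs H1 <= Rabs C1) by nra.
  assert (Ht : 0 <= r2 + (z + 1) ^ 2 <= K + 1) by nra.
  assert (C2 * (r2 + (z + 1) ^ 2) <= Rabs C2 * (r2 + (z + 1) ^ 2))
    by (apply Rmult_le_compat_r; lra).
  assert (Rabs C2 * (r2 + (z + 1) ^ 2) <= Rabs C2 * (K + 1))
    by (apply Rmult_le_compat_l; lra).
  lra.
Qed.

Section Ellipsoid.

Variables a b nu1 : R.
Hypotheses (Ha : 0 < a) (Hb : 0 < b) (Hnu1 : 0 < nu1).

Lemma ellipsoid_coef_pos : 0 < b / (a + 1).
Proof. apply Rdiv_lt_0_compat; lra. Qed.

Lemma on_S_weighted_norm2_le x y z :
  on_S a b nu1 x y z -> b / (a + 1) * (x ^ 2 + y ^ 2) <= 1.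
Proof. unfold on_S, Fell. intros HS. nra. Qed.

Lemma on_S_norm2_le x y z :
  on_S a b nu1 x y z -> x ^ 2 + y ^ 2 <= (a + 1) / b.
Proof.
  intros HS. pose proof ellipsoid_coef_pos.
  pose proof (on_S_weighted_norm2_le _ _ _ HS).
  apply (Rmult_le_reg_l (b / (a + 1))); [lra|].
  replace (b / (a + 1) * ((a + 1) / b)) with 1 by (field; lra). lra.
Qed.

Lemma on_S_sqr_z_le x y z : on_S a b nu1 x y z -> z ^ 2 <= 1.
Proof.
  unfold on_S, Fell. intros HS.
  pose proof ellipsoid_coef_pos. nra.
Qed.

Lemma on_S_coords_le x y z :
  on_S a b nu1 x y z ->
  Rabs x <= 1 + (a + 1) / b /\ Rabs y <= 1 + (a + 1) / b /\
  Rabs z <= 1 + (a + 1) / b.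
Proof.
  intros HS.
  pose proof (on_S_norm2_le _ _ _ HS). pose proof (on_S_sqr_z_le _ _ _ HS).
  assert (0 <= (a + 1) / b) by (apply Rdiv_le_0_compat; lra).
  set (K := (a + 1) / b) in *.
  split; [|split].
  - apply Rabs_le_of_sqr_le; nra.
  - apply Rabs_le_of_sqr_le; nra.
  - pose proof (pow2_abs z). pose proof (Rabs_pos z). nra.
Qed.

Lemma points_outward_on_S e s ft gt ht x y z :
  e <> 0 -> on_S a b nu1 x y z ->
  points_outward a b e s ft gt ht x y z <->
  0 < 2 * (b / (a + 1)) * (x ^ 2 + y ^ 2) * s - 2 * nu1 * z
      + 2 * (b / (a + 1)) * e * (x * ft x y z e s + y * gt x y z e s)
      + 2 * z * e * ht x y z e s.
Proof.
  unfold points_outward, Xfield, on_S, Fell. intros He HS.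
  match goal with |- ?L > 0 <-> 0 < ?R =>
    assert (Hd : L - R = 2 * z * (z ^ 2 + b / (a + 1) * (x ^ 2 + y ^ 2) - (1 - nu1)))
      by (field; lra) end.
  rewrite HS in Hd. lra.
Qed.

Lemma flux_perturbation_bound e s sigma0 x y z F G H Cf Cg Ch :
  0 < e -> Rabs s <= sigma0 * e -> -1 <= z <= 0 ->
  b / (a + 1) * (x ^ 2 + y ^ 2) <= 1 ->
  Rabs (x * F) <= Rabs Cf * (x ^ 2 + y ^ 2) ->
  Rabs (y * G) <= Rabs Cg * (x ^ 2 + y ^ 2) ->
  Rabs H <= Ch ->
  - (e * (2 * sigma0 + 2 * (Rabs Cf + Rabs Cg) + 2 * Ch)) <=
  2 * (b / (a + 1)) * (x ^ 2 + y ^ 2) * s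
  + 2 * (b / (a + 1)) * e * (x * F + y * G) + 2 * z * e * H.
Proof.
  intros He Hs Hz Hcr HF HG HH.
  pose proof ellipsoid_coef_pos as Hc.
  set (c := b / (a + 1)) in *. set (r2 := x ^ 2 + y ^ 2) in *.
  assert (Hr2 : 0 <= r2) by (unfold r2; nra).
  pose proof (Rabs_pos Cf). pose proof (Rabs_pos Cg).
  pose proof (Rabs_triang (x * F) (y * G)).
  assert (Hsig : - (sigma0 * e) <= s) by (pose proof (Rabs_le_between s (sigma0 * e)); tauto).
  assert (HFG : - ((Rabs Cf + Rabs Cg) * r2) <= x * F + y * G)
    by (pose proof (Rle_abs (- (x * F + y * G))); rewrite Rabs_Ropp in *; lra).
  assert (T1 : - (2 * sigma0 * e) <= 2 * c * r2 * s).
  { assert (0 <= sigma0 * e) by (pose proof (Rabs_pos s); lra).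
    assert (0 <= c * r2) by (apply Rmult_le_pos; lra).
    assert (0 <= c * r2 * (s + sigma0 * e)) by (apply Rmult_le_pos; lra).
    nra. }
  assert (T2 : - (2 * e * (Rabs Cf + Rabs Cg)) <= 2 * c * e * (x * F + y * G)).
  { assert (0 <= (Rabs Cf + Rabs Cg) * (1 - c * r2)) by (apply Rmult_le_pos; lra).
    assert (0 <= c * e) by (apply Rmult_le_pos; lra).
    assert (0 <= c * e * (x * F + y * G + (Rabs Cf + Rabs Cg) * r2))
      by (apply Rmult_le_pos; lra).
    nra. }
  assert (T3 : - (2 * e * Ch) <= 2 * z * e * H).
  { assert (HzH : Rabs (z * H) <= Ch).
    { rewrite Rabs_mult, Rabs_left1 by lra. pose proof (Rabs_pos H). nra. }
    pose proof (Rle_abs (- (z * H))). rewrite Rabs_Ropp in *.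
    replace (2 * z * e * H) with (2 * e * (z * H)) by ring.
    apply Rmult_le_compat_l with (r := 2 * e) in HzH; [|lra]. nra. }
  lra.
Qed.

Lemma inD_on_S sigma0 eps1 M psi e s x y z :
  psi_props sigma0 eps1 M psi -> admissible sigma0 eps1 e s ->
  e * Rabs M < nu1 -> -1 <= z <= 0 -> on_S a b nu1 x y z ->
  inD a b psi e s x y z.
Proof.
  unfold on_S, Fell. intros Hpsi Hadm HeM Hz HS.
  split; [lra|]. intros th _ _.
  destruct (proj2 (Hpsi e s z th Hadm) (proj2 Hz)) as [Hp _].
  destruct Hadm as [[He _] _].
  pose proof (Rabs_pos (psi e s z th)). pose proof (Rabs_le_between (psi e s z th) M).
  assert (Hz2 : 0 <= 1 - z ^ 2 <= 1) by nra.
  assert (Hez : 0 <= e * (1 - z ^ 2)) by (apply Rmult_le_pos; lra).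
  assert (0 <= e * (1 - z ^ 2) * (psi e s z th + M)) by (apply Rmult_le_pos; lra).
  assert (e * (1 - z ^ 2) * M <= e * M).
  { apply Rmult_le_compat_r; [lra|].
    assert (0 <= e * z ^ 2) by (apply Rmult_le_pos; nra). nra. }
  rewrite Rabs_pos_eq in HeM by lra.
  lra.
Qed.

Lemma points_outward_of_small_pert sigma0 e s ft gt ht x y z Cf Cg Ch :
  0 < e -> Rabs s <= sigma0 * e -> on_S a b nu1 x y z ->
  -1 <= z <= - e * Rabs (ln e) ->
  2 * sigma0 + 2 * (Rabs Cf + Rabs Cg) + 2 * Ch < Rabs (ln e) * (2 * nu1) ->
  Rabs (ft x y z e s) <= Cf * sqrt (x ^ 2 + y ^ 2) ->
  Rabs (gt x y z e s) <= Cg * sqrt (x ^ 2 + y ^ 2) ->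
  Rabs (ht x y z e s) <= Ch ->
  points_outward a b e s ft gt ht x y z.
Proof.
  intros He Hs HS Hz Hln BF BG BH.
  apply points_outward_on_S; [lra | exact HS |].
  apply Rabs_mul_le_norm2 in BF.
  rewrite Rplus_comm in BG. apply Rabs_mul_le_norm2 in BG. rewrite Rplus_comm in BG.
  pose proof (Rabs_pos (ln e)).
  pose proof (flux_perturbation_bound e s sigma0 x y z _ _ _ Cf Cg Ch He Hs
                ltac:(nra) (on_S_weighted_norm2_le x y z HS) BF BG BH).
  nra.
Qed.

End Ellipsoid.

Theorem lemma3p5 (a b sigma0 nu1 eps1 M : R) (ft gt ht h1 h2 : pert)
  (psi : R -> R -> R -> R -> R) :
  0 < a -> 0 < b -> 0 < sigma0 -> 0 < nu1 -> 0 < eps1 ->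
  bigO_xy sigma0 eps1 ft ->
  bigO_xy sigma0 eps1 gt ->
  (forall x y z e s, ht x y z e s = (z + 1) * h1 x y z e s + h2 x y z e s) ->
  bounded_pert sigma0 eps1 h1 ->
  bigO2_xyz1 sigma0 eps1 h2 ->
  psi_props sigma0 eps1 M psi ->
  exists eps0, 0 < eps0 /\
    forall e s, 0 < e < eps0 -> Rabs s <= sigma0 * e ->
      forall x y z, on_S a b nu1 x y z -> -1 <= z <= - e * Rabs (ln e) ->
        inD a b psi e s x y z /\ points_outward a b e s ft gt ht x y z.
Proof.
  intros Ha Hb Hs0 Hnu He1 Hf Hg Hht Hh1 Hh2 Hpsi.
  set (K := (a + 1) / b).
  assert (HK : 0 < K) by (apply Rdiv_lt_0_compat; lra).
  destruct (Hf (1 + K)) as [Cf HCf]; [lra|].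
  destruct (Hg (1 + K)) as [Cg HCg]; [lra|].
  destruct (Hh1 (1 + K)) as [C1 HC1]; [lra|].
  destruct (Hh2 (1 + K)) as [C2 HC2]; [lra|].
  set (A := 2 * sigma0 + 2 * (Rabs Cf + Rabs Cg) + 2 * (Rabs C1 + Rabs C2 * (K + 1))).
  exists (Rmin eps1 (Rmin (nu1 / (Rabs M + 1)) (exp (- (A / (2 * nu1)))))).
  split.
  { pose proof (Rabs_pos M). pose proof (exp_pos (- (A / (2 * nu1)))).
    assert (0 < nu1 / (Rabs M + 1)) by (apply Rdiv_lt_0_compat; lra).
    repeat apply Rmin_pos; lra. }
  intros e s [He0 He] Hs x y z HS Hz.
  apply Rmin_Rgt_l in He as [He_1 [He_M He_ln]%Rmin_Rgt_l].
  assert (Hadm : admissible sigma0 eps1 e s) by (split; [lra | exact Hs]).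
  assert (Hzneg : z <= 0) by (pose proof (Rabs_pos (ln e)); nra).
  destruct (on_S_coords_le a b nu1 Ha Hb Hnu x y z HS) as (Hx & Hy & Hz').
  split.
  - apply (inD_on_S a b nu1 sigma0 eps1 M); auto; [|lra].
    pose proof (Rabs_pos M). apply Rlt_div_r in He_M; lra.
  - apply (points_outward_of_small_pert a b nu1 Ha Hb Hnu sigma0 e s ft gt ht x y z
             Cf Cg (Rabs C1 + Rabs C2 * (K + 1))); auto.
    + fold A. apply Rlt_div_l; [lra|]. apply lt_Rabs_ln_of_lt_exp; lra.
    + rewrite Hht. apply Rabs_ht_split_le with (r2 := x ^ 2 + y ^ 2); auto; [lra|].
      split; [nra | exact (on_S_norm2_le a b nu1 Ha Hb Hnu x y z HS)].
Qed.
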